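(* Let $\lambda\neq0$ be a constant and let $\phi(x,t)$ be a smooth function with $\phi_x\neq0$ satisfying $\{\phi;x\}_t+\frac4\lambda\big(\frac{\phi_t}{\phi_x}\big)_x=0$. Let $p=\frac{\phi_t}{\lambda\phi_x}$, $U=\frac12\{\phi;x\}+\frac1\lambda$, let $A,B$ be constants not both zero, and let $V=\frac{A\phi+B}{\sqrt{\phi_x}}$ on a region where $A\phi+B\neq0$. Define $$\widetilde U=U+2(\log V)_{xx},\qquad \widetilde p=\frac{\phi_t}{\lambda\phi_x}-\Big(\log\frac{A\phi+B}{\sqrt{\phi_x}}\Big)_{xt}.$$ Then $1/V$ solves the system $$W_{xx}+\Big(\widetilde U-\frac1\lambda\Big)W=0,\qquad W_t=\lambda\Big(\widetilde pW_x-\frac12\widetilde p_xW\Big).$$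
   Context: The Schwarzian derivative of a function $\phi(x,t)$ with $\phi_x\neq0$ is $\{\phi;x\}=\frac{\phi_{xxx}}{\phi_x}-\frac32\frac{\phi_{xx}^2}{\phi_x^2}$. All functions are smooth. *)

From Stdlib Require Import Reals List.
From Coquelicot Require Import Coquelicot.
Open Scope R_scope.

Definition pDx (f : R -> R -> R) : R -> R -> R :=
  fun x t => Derive (fun y => f y t) x.
Definition pDt (f : R -> R -> R) : R -> R -> R :=
  fun x t => Derive (fun s => f x s) t.

(* Iterated partial derivative along a word: true = d/dx, false = d/dt. *)
Fixpoint pdiff (w : list bool) (f : R -> R -> R) : R -> R -> R :=
  match w with
  | nil => f
  | b :: w' => (if b then pDx else pDt) (pdiff w' f)
  end.

Definition smooth_on (D : R * R -> Prop) (f : R -> R -> R) : Prop :=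
  forall (w : list bool) (x t : R), D (x, t) ->
    ex_derive (fun y => pdiff w f y t) x /\
    ex_derive (fun s => pdiff w f x s) t /\
    continuous (fun z : R * R => pdiff w f (fst z) (snd z)) (x, t).

Definition schwarzian (phi : R -> R -> R) : R -> R -> R :=
  fun x t => pDx (pDx (pDx phi)) x t / pDx phi x t
             - 3 / 2 * (pDx (pDx phi) x t / pDx phi x t) ^ 2.

From Stdlib Require Import Reals Lra List.
From Coquelicot Require Import Coquelicot.
Import ListNotations.
Open Scope R_scope.

(* Write l = (ln|V|)_x and m = (ln|V|)_t, so that W = 1/V has W_x = -l W and
   W_t = -m W.  As ln|V| = ln|A phi + B| - 1/2 ln|phi_x|, both are rational in the
   derivatives of phi, and V_xx + 1/2 {phi;x} V = 0 becomes the Riccati identity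
   l_x + l^2 + 1/2 {phi;x} = 0; since U~ - 1/lambda = 1/2 {phi;x} + 2 l_x, this is
   the first equation for W.  For the second, p~ = p - l_t.  The seed V satisfies
   V_t = lambda (p V_x - 1/2 p_x V) for every phi, and the t-derivative of the
   Riccati identity gives l l_t + 1/2 (l_t)_x = -1/4 {phi;x}_t, which the evolution
   equation for phi turns into p_x. *)

Lemma Rabs_sign (h : R) : Rabs h = sign h * h.
Proof.
  destruct (Rtotal_order h 0) as [H|[H|H]].
  - rewrite Rabs_left, sign_eq_m1 by lra. ring.
  - subst. rewrite sign_0, Rabs_R0. ring.
  - rewrite Rabs_pos_eq, sign_eq_1 by lra. ring.
Qed.

Lemma Derive_ln_abs (f : R -> R) x : ex_derive f x -> f x <> 0 ->
  Derive (fun y => ln (Rabs (f y))) x = Derive f x / f x.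
Proof.
  intros Hf Hx. apply is_derive_unique. auto_derive.
  - repeat split; [exact Hf | exact Hx | now apply Rabs_pos_lt].
  - change (Derive (fun y => f y) x) with (Derive f x). rewrite Rabs_sign.
    field. split; [exact Hx | now apply sign_neq_0].
Qed.

Lemma Derive_inv_ln_abs (f : R -> R) x : ex_derive f x -> f x <> 0 ->
  Derive (fun y => / f y) x = - (Derive (fun y => ln (Rabs (f y))) x * / f x).
Proof.
  intros Hf Hx. rewrite Derive_inv, Derive_ln_abs by assumption. field. exact Hx.
Qed.

Lemma ln_abs_div_sqrt_abs a b : a <> 0 -> b <> 0 ->
  ln (Rabs (a / sqrt (Rabs b))) = ln (Rabs a) - / 2 * ln (Rabs b).
Proof.
  intros Ha Hb.
  assert (Hb' : 0 < Rabs b) by now apply Rabs_pos_lt.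
  assert (Hs : 0 < sqrt (Rabs b)) by now apply sqrt_lt_R0.
  assert (Hln : ln (Rabs b) = 2 * ln (sqrt (Rabs b))).
  { rewrite <- (sqrt_sqrt (Rabs b)) at 1 by lra. rewrite ln_mult by exact Hs. ring. }
  rewrite Rabs_div, (Rabs_pos_eq (sqrt _)), ln_div, Hln by (lra || now apply Rabs_pos_lt).
  field.
Qed.

Lemma pdiff_app w1 w2 f : pdiff w1 (pdiff w2 f) = pdiff (w1 ++ w2) f.
Proof. induction w1 as [|b w1 IH]; simpl; [reflexivity | now rewrite IH]. Qed.

Lemma smooth_on_pDx D f : smooth_on D f -> smooth_on D (pDx f).
Proof.
  intros Hf w x t Hxt. change (pdiff w (pDx f)) with (pdiff w (pdiff [true] f)).
  rewrite pdiff_app. now apply Hf.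
Qed.

Lemma smooth_on_pDt D f : smooth_on D f -> smooth_on D (pDt f).
Proof.
  intros Hf w x t Hxt. change (pdiff w (pDt f)) with (pdiff w (pdiff [false] f)).
  rewrite pdiff_app. now apply Hf.
Qed.

Lemma smooth_on_ex_derive_x D f x t : smooth_on D f -> D (x, t) ->
  ex_derive (fun y => f y t) x.
Proof. intros Hf Hxt. exact (proj1 (Hf [] x t Hxt)). Qed.

Lemma smooth_on_ex_derive_t D f x t : smooth_on D f -> D (x, t) ->
  ex_derive (fun s => f x s) t.
Proof. intros Hf Hxt. exact (proj1 (proj2 (Hf [] x t Hxt))). Qed.

Lemma open_locally_2d (D : R * R -> Prop) x t : open D -> D (x, t) ->
  locally_2d (fun u v => D (u, v)) x t.
Proof.
  intros HD Hxt. apply locally_2d_locally.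
  eapply filter_imp; [| exact (HD _ Hxt)]. now intros [u v].
Qed.

Lemma pDx_ext_on (D : R * R -> Prop) (F G : R -> R -> R) x t : open D -> D (x, t) ->
  (forall y s, D (y, s) -> F y s = G y s) -> pDx F x t = pDx G x t.
Proof.
  intros HD Hxt HFG. apply Derive_ext_loc.
  eapply filter_imp; [| exact (locally_2d_1d_const_y _ _ _ (open_locally_2d D x t HD Hxt))].
  intros y; apply HFG.
Qed.

Lemma pDt_ext_on (D : R * R -> Prop) (F G : R -> R -> R) x t : open D -> D (x, t) ->
  (forall y s, D (y, s) -> F y s = G y s) -> pDt F x t = pDt G x t.
Proof.
  intros HD Hxt HFG. apply Derive_ext_loc.
  eapply filter_imp; [| exact (locally_2d_1d_const_x _ _ _ (open_locally_2d D x t HD Hxt))].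
  intros s; apply HFG.
Qed.

Lemma smooth_on_pDx_pDt D f x t : open D -> smooth_on D f -> D (x, t) ->
  pDx (pDt f) x t = pDt (pDx f) x t.
Proof.
  intros HD Hf Hxt. apply Schwarz.
  - destruct (open_locally_2d D x t HD Hxt) as [d Hd]. exists d. intros u v Hu Hv.
    specialize (Hd u v Hu Hv). repeat split.
    + exact (proj1 (Hf [] u v Hd)).
    + exact (proj1 (proj2 (Hf [] u v Hd))).
    + exact (proj1 (Hf [false] u v Hd)).
    + exact (proj1 (proj2 (Hf [true] u v Hd))).
  - apply continuity_2d_pt_filterlim. exact (proj2 (proj2 (Hf [true; false] x t Hxt))).
  - apply continuity_2d_pt_filterlim. exact (proj2 (proj2 (Hf [false; true] x t Hxt))).
Qed.

Lemma pDx_is_derive (F : R -> R -> R) x t l : is_derive (fun y => F y t) x l -> pDx F x t = l.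
Proof. apply is_derive_unique. Qed.

Lemma pDt_is_derive (F : R -> R -> R) x t l : is_derive (fun s => F x s) t l -> pDt F x t = l.
Proof. apply is_derive_unique. Qed.

Ltac fold_partials := repeat match goal with
  | |- context [Derive (fun z => ?F z ?s) ?y] =>
      change (Derive (fun z => F z s) y) with (pDx F y s)
  | |- context [Derive (fun z => ?F ?y z) ?s] =>
      change (Derive (fun z => F y z) s) with (pDt F y s)
  end.

Section DarbouxSeed.

Variables (A B : R) (phi : R -> R -> R) (D : R * R -> Prop).
Hypothesis D_open : open D.
Hypothesis phi_smooth : smooth_on D phi.
Hypothesis pDx_phi_neq0 : forall x t, D (x, t) -> pDx phi x t <> 0.
Hypothesis affine_phi_neq0 : forall x t, D (x, t) -> A * phi x t + B <> 0.

Definition seed x t := (A * phi x t + B) / sqrt (Rabs (pDx phi x t)).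

Definition dlog_seed_x x t :=
  A * pDx phi x t / (A * phi x t + B) - / 2 * (pDx (pDx phi) x t / pDx phi x t).

Definition dlog_seed_t x t :=
  A * pDt phi x t / (A * phi x t + B) - / 2 * (pDt (pDx phi) x t / pDx phi x t).

Definition dlog_seed_xt x t :=
  A * pDt (pDx phi) x t / (A * phi x t + B)
  - A * pDx phi x t * (A * pDt phi x t) / (A * phi x t + B) ^ 2
  - / 2 * (pDt (pDx (pDx phi)) x t / pDx phi x t
           - pDx (pDx phi) x t * pDt (pDx phi) x t / pDx phi x t ^ 2).

Ltac nonzero := match goal with
  | |- _ * _ <> 0 => apply Rmult_integral_contrapositive_currified; nonzero
  | |- _ / _ <> 0 => unfold Rdiv; nonzero
  | |- / _ <> 0 => apply Rinv_neq_0_compat; nonzero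
  | |- _ ^ _ <> 0 => apply pow_nonzero; nonzero
  | |- sign _ <> 0 => apply sign_neq_0; nonzero
  | |- sqrt _ <> 0 => apply Rgt_not_eq, sqrt_lt_R0; nonzero
  | |- 0 < Rabs _ => apply Rabs_pos_lt; nonzero
  | |- pDx phi _ _ <> 0 => apply pDx_phi_neq0; assumption
  | |- A * phi _ _ + B <> 0 => apply affine_phi_neq0; assumption
  | |- True => exact I
  | |- _ => lra
  end.

Ltac smooth_partial := match goal with
  | |- smooth_on D (pDx _) => apply smooth_on_pDx; smooth_partial
  | |- smooth_on D (pDt _) => apply smooth_on_pDt; smooth_partial
  | |- smooth_on D phi => exact phi_smooth
  end.

Ltac side_conditions := repeat split; match goal with
  | |- ex_derive (fun z => ?F z ?s) ?y =>
      apply (smooth_on_ex_derive_x D F); [smooth_partial | assumption]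
  | |- ex_derive (fun z => ?F ?y z) ?s =>
      apply (smooth_on_ex_derive_t D F); [smooth_partial | assumption]
  | |- _ => nonzero
  end.

Lemma seed_neq0 x t : D (x, t) -> seed x t <> 0.
Proof. intros Hxt. unfold seed. nonzero. Qed.

Lemma ex_derive_seed_x x t : D (x, t) -> ex_derive (fun y => seed y t) x.
Proof. intros Hxt. unfold seed. auto_derive. side_conditions. Qed.

Lemma ex_derive_seed_t x t : D (x, t) -> ex_derive (fun s => seed x s) t.
Proof. intros Hxt. unfold seed. auto_derive. side_conditions. Qed.

Lemma ln_abs_seed x t : D (x, t) ->
  ln (Rabs (seed x t)) = ln (Rabs (A * phi x t + B)) - / 2 * ln (Rabs (pDx phi x t)).
Proof. intros Hxt. apply ln_abs_div_sqrt_abs; nonzero. Qed.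

Lemma pDx_ln_abs_seed x t : D (x, t) ->
  pDx (fun x t => ln (Rabs (seed x t))) x t = dlog_seed_x x t.
Proof.
  intros Hxt. rewrite (pDx_ext_on D _ _ x t D_open Hxt ln_abs_seed).
  apply pDx_is_derive. unfold dlog_seed_x. auto_derive; [side_conditions |].
  fold_partials. rewrite !Rabs_sign. field. side_conditions.
Qed.

Lemma pDt_ln_abs_seed x t : D (x, t) ->
  pDt (fun x t => ln (Rabs (seed x t))) x t = dlog_seed_t x t.
Proof.
  intros Hxt. rewrite (pDt_ext_on D _ _ x t D_open Hxt ln_abs_seed).
  apply pDt_is_derive. unfold dlog_seed_t. auto_derive; [side_conditions |].
  fold_partials. rewrite !Rabs_sign. field. side_conditions.
Qed.

Lemma pDx_inv_seed x t : D (x, t) ->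
  pDx (fun x t => / seed x t) x t = - (dlog_seed_x x t * / seed x t).
Proof.
  intros Hxt. rewrite <- (pDx_ln_abs_seed x t Hxt).
  apply (Derive_inv_ln_abs (fun y => seed y t)).
  - exact (ex_derive_seed_x x t Hxt).
  - exact (seed_neq0 x t Hxt).
Qed.

Lemma pDt_inv_seed x t : D (x, t) ->
  pDt (fun x t => / seed x t) x t = - (dlog_seed_t x t * / seed x t).
Proof.
  intros Hxt. rewrite <- (pDt_ln_abs_seed x t Hxt).
  apply (Derive_inv_ln_abs (fun s => seed x s)).
  - exact (ex_derive_seed_t x t Hxt).
  - exact (seed_neq0 x t Hxt).
Qed.

Lemma ex_derive_dlog_seed_x x t : D (x, t) -> ex_derive (fun y => dlog_seed_x y t) x.
Proof. intros Hxt. unfold dlog_seed_x. auto_derive. side_conditions. Qed.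

Lemma pDx_pDx_inv_seed x t : D (x, t) ->
  pDx (pDx (fun x t => / seed x t)) x t
  = (dlog_seed_x x t ^ 2 - pDx dlog_seed_x x t) * / seed x t.
Proof.
  intros Hxt.
  rewrite (pDx_ext_on D _ (fun x t => - (dlog_seed_x x t * / seed x t)) x t D_open Hxt
             pDx_inv_seed).
  unfold pDx at 1. rewrite Derive_opp, Derive_mult.
  - change (Derive (fun y => / seed y t) x) with (pDx (fun x t => / seed x t) x t).
    fold_partials. rewrite pDx_inv_seed by exact Hxt. ring.
  - exact (ex_derive_dlog_seed_x x t Hxt).
  - auto_derive. repeat split.
    + exact (ex_derive_seed_x x t Hxt).
    + exact (seed_neq0 x t Hxt).
Qed.

(* The equation V_xx + 1/2 {phi;x} V = 0 in terms of l = V_x / V. *)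
Lemma dlog_seed_riccati x t : D (x, t) ->
  pDx dlog_seed_x x t + dlog_seed_x x t ^ 2 + / 2 * schwarzian phi x t = 0.
Proof.
  intros Hxt. erewrite pDx_is_derive.
  2: { unfold dlog_seed_x. auto_derive; [side_conditions | reflexivity]. }
  fold_partials. unfold schwarzian, dlog_seed_x. field. side_conditions.
Qed.

Lemma inv_seed_x_equation x t : D (x, t) ->
  pDx (pDx (fun x t => / seed x t)) x t
  + (/ 2 * schwarzian phi x t + 2 * pDx (pDx (fun x t => ln (Rabs (seed x t)))) x t)
    * / seed x t = 0.
Proof.
  intros Hxt.
  rewrite pDx_pDx_inv_seed, (pDx_ext_on D _ _ x t D_open Hxt pDx_ln_abs_seed) by exact Hxt.
  transitivity
    ((pDx dlog_seed_x x t + dlog_seed_x x t ^ 2 + / 2 * schwarzian phi x t) * / seed x t).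
  - ring.
  - rewrite (dlog_seed_riccati x t Hxt). ring.
Qed.

Lemma pDt_pDx_ln_abs_seed x t : D (x, t) ->
  pDt (pDx (fun x t => ln (Rabs (seed x t)))) x t = dlog_seed_xt x t.
Proof.
  intros Hxt. rewrite (pDt_ext_on D _ _ x t D_open Hxt pDx_ln_abs_seed).
  apply pDt_is_derive. unfold dlog_seed_x, dlog_seed_xt. auto_derive; [side_conditions |].
  fold_partials. field. side_conditions.
Qed.

(* The t-derivative of the Riccati identity, with the mixed partials of l
   commuted. *)
Lemma dlog_seed_riccati_t x t : D (x, t) ->
  dlog_seed_x x t * dlog_seed_xt x t + / 2 * pDx dlog_seed_xt x t
  + / 4 * pDt (schwarzian phi) x t = 0.
Proof.
  intros Hxt. erewrite (pDx_is_derive dlog_seed_xt).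
  2: { unfold dlog_seed_xt. auto_derive; [side_conditions | reflexivity]. }
  erewrite (pDt_is_derive (schwarzian phi)).
  2: { unfold schwarzian. auto_derive; [side_conditions | reflexivity]. }
  fold_partials.
  rewrite (smooth_on_pDx_pDt D phi), (smooth_on_pDx_pDt D (pDx phi)),
    (smooth_on_pDx_pDt D (pDx (pDx phi))) by first [exact D_open | exact Hxt | smooth_partial].
  unfold dlog_seed_x, dlog_seed_xt. field. side_conditions.
Qed.

(* V_t = lambda (p V_x - 1/2 p_x V), divided by V and by lambda. *)
Lemma dlog_seed_t_flow x t : D (x, t) ->
  dlog_seed_t x t = pDt phi x t / pDx phi x t * dlog_seed_x x t
                    - / 2 * pDx (fun x t => pDt phi x t / pDx phi x t) x t.
Proof.
  intros Hxt.
  erewrite (pDx_is_derive (fun x t => pDt phi x t / pDx phi x t))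
    by (auto_derive; [side_conditions | reflexivity]).
  fold_partials. rewrite (smooth_on_pDx_pDt D phi x t D_open phi_smooth Hxt).
  unfold dlog_seed_t, dlog_seed_x. field. side_conditions.
Qed.

Definition tilde_p lambda x t :=
  pDt phi x t / (lambda * pDx phi x t)
  - pDt (pDx (fun x t => ln (Rabs (seed x t)))) x t.

Lemma pDx_tilde_p lambda x t : D (x, t) ->
  pDx (tilde_p lambda) x t
  = / lambda * pDx (fun x t => pDt phi x t / pDx phi x t) x t - pDx dlog_seed_xt x t.
Proof.
  intros Hxt.
  rewrite (pDx_ext_on D _ (fun x t => / lambda * (pDt phi x t / pDx phi x t) - dlog_seed_xt x t)
             x t D_open Hxt).
  - unfold pDx at 1. rewrite Derive_minus, Derive_scal; [reflexivity | |].
    + auto_derive. side_conditions.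
    + unfold dlog_seed_xt. auto_derive. side_conditions.
  - intros y s Hys. unfold tilde_p. rewrite pDt_pDx_ln_abs_seed by exact Hys.
    unfold Rdiv. rewrite Rinv_mult. ring.
Qed.

Lemma inv_seed_t_equation lambda x t : lambda <> 0 -> D (x, t) ->
  pDt (schwarzian phi) x t + 4 / lambda * pDx (fun x t => pDt phi x t / pDx phi x t) x t = 0 ->
  pDt (fun x t => / seed x t) x t
  = lambda * (tilde_p lambda x t * pDx (fun x t => / seed x t) x t
              - / 2 * pDx (tilde_p lambda) x t * / seed x t).
Proof.
  intros Hl Hxt Hpde.
  rewrite pDt_inv_seed, pDx_inv_seed, pDx_tilde_p, dlog_seed_t_flow by exact Hxt.
  unfold tilde_p at 1. rewrite pDt_pDx_ln_abs_seed by exact Hxt.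
  assert (Hric := dlog_seed_riccati_t x t Hxt).
  replace (pDx dlog_seed_xt x t)
    with (- 2 * (dlog_seed_x x t * dlog_seed_xt x t) - / 2 * pDt (schwarzian phi) x t) by lra.
  replace (pDt (schwarzian phi) x t)
    with (- (4 / lambda) * pDx (fun x t => pDt phi x t / pDx phi x t) x t) by lra.
  field. split; [exact (seed_neq0 x t Hxt) | split; [exact Hl | nonzero]].
Qed.

End DarbouxSeed.

Theorem mainTheorem7
  (lambda A B : R) (phi : R -> R -> R) (D : R * R -> Prop) :
  lambda <> 0 ->
  open D ->
  smooth_on D phi ->
  (forall x t, D (x, t) -> pDx phi x t <> 0) ->
  (forall x t, D (x, t) ->
     pDt (schwarzian phi) x t
     + 4 / lambda * pDx (fun x' t' => pDt phi x' t' / pDx phi x' t') x t = 0) ->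
  ~ (A = 0 /\ B = 0) ->
  (forall x t, D (x, t) -> A * phi x t + B <> 0) ->
  let p := fun x t => pDt phi x t / (lambda * pDx phi x t) in
  let U := fun x t => / 2 * schwarzian phi x t + / lambda in
  let V := fun x t => (A * phi x t + B) / sqrt (Rabs (pDx phi x t)) in
  let Ut := fun x t => U x t + 2 * pDx (pDx (fun x' t' => ln (Rabs (V x' t')))) x t in
  let pt := fun x t => p x t
              - pDt (pDx (fun x' t' =>
                   ln (Rabs ((A * phi x' t' + B) / sqrt (Rabs (pDx phi x' t')))))) x t in
  let W := fun x t => / V x t in
  forall x t, D (x, t) ->
    pDx (pDx W) x t + (Ut x t - / lambda) * W x t = 0 /\
    pDt W x t = lambda * (pt x t * pDx W x t - / 2 * pDx pt x t * W x t).
Proof.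
  (* [A * phi + B <> 0] on [D] already rules out [A = B = 0]. *)
  intros Hl HD Hphi Hphix Hpde _ Hg p U V Ut pt W x t Hxt. split.
  - transitivity (pDx (pDx W) x t
      + (/ 2 * schwarzian phi x t + 2 * pDx (pDx (fun x t => ln (Rabs (V x t)))) x t) * W x t).
    + unfold Ut, U. ring.
    + exact (inv_seed_x_equation A B phi D HD Hphi Hphix Hg x t Hxt).
  - exact (inv_seed_t_equation A B phi D HD Hphi Hphix Hg lambda x t Hl Hxt (Hpde x t Hxt)).
Qed.
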